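(* For $\alpha=2$ and $\beta=3$ (so $\alpha>0$, $\beta>\alpha$), the Sharma-Mittal entropy $S_{2,3}(\mathbf{p})=\frac12\left(1-\left(\sum_i p_i^2\right)^2\right)$ is neither supermodular nor submodular on the majorization lattice $(\mathcal{P}_4,\preceq)$: there exist $\mathbf{p},\mathbf{q}\in\mathcal{P}_4$ with $S_{2,3}(\mathbf{p}\vee\mathbf{q})+S_{2,3}(\mathbf{p}\wedge\mathbf{q})<S_{2,3}(\mathbf{p})+S_{2,3}(\mathbf{q})$, and there exist $\mathbf{p}',\mathbf{q}'\in\mathcal{P}_4$ with $S_{2,3}(\mathbf{p}'\vee\mathbf{q}')+S_{2,3}(\mathbf{p}'\wedge\mathbf{q}')>S_{2,3}(\mathbf{p}')+S_{2,3}(\mathbf{q}')$.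
   Context: $\mathcal{P}_4$ is the set of probability vectors of length 4, taken with components in non-increasing order. Majorization: $\mathbf{p}\preceq\mathbf{q}$ iff $\sum_{i=1}^k p_i\le\sum_{i=1}^k q_i$ for $k=1,\dots,4$; this makes $\mathcal{P}_4$ a lattice. The greatest lower bound $\mathbf{p}\wedge\mathbf{q}=\mathbf{r}$ satisfies $\sum_{i=1}^k r_i=\min\{\sum_{i=1}^k p_i,\sum_{i=1}^k q_i\}$. The least upper bound $\mathbf{p}\vee\mathbf{q}$ is the least element majorizing both; concretely, let $\mathbf{w}$ satisfy $\sum_{i=1}^k w_i=\max\{\sum_{i=1}^k p_i,\sum_{i=1}^k q_i\}$; if $\mathbf{w}$ is non-increasing then $\mathbf{p}\vee\mathbf{q}=\mathbf{w}$, otherwise it is obtained by repeatedly replacing each maximal consecutive block of coordinates violating the non-increasing order by its average. A function $\phi$ is supermodular if $\phi(\mathbf{x})+\phi(\mathbf{y})\le\phi(\mathbf{x}\wedge\mathbf{y})+\phi(\mathbf{x}\vee\mathbf{y})$ for all $\mathbf{x},\mathbf{y}$, and submodular if the reverse inequality holds for all $\mathbf{x},\mathbf{y}$. The Sharma-Mittal entropy is $S_{\alpha,\beta}(\mathbf{p})=\frac{1}{1-\beta}\left[\left(\sum_{i} p_i^\alpha\right)^{\frac{1-\beta}{1-\alpha}}-1\right]$. *)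

From HB Require Import structures.
From mathcomp Require Import all_boot all_order all_algebra.
From mathcomp Require Import all_classical all_reals all_analysis.
Set Implicit Arguments. Unset Strict Implicit. Unset Printing Implicit Defensive.
Import Order.TTheory GRing.Theory Num.Theory.
Local Open Scope ring_scope.

Section Defs.
Variable R : realType.

Definition vec4 := 'I_4 -> R.

Definition psum (p : vec4) (k : nat) : R := \sum_(i < 4 | (i < k)%N) p i.

Definition inP4 (p : vec4) : Prop :=
  (forall i, 0 <= p i) /\ (\sum_(i < 4) p i = 1) /\
  (forall i j : 'I_4, (i <= j)%N -> p j <= p i).

Definition majorized (p q : vec4) : Prop :=
  forall k, (k <= 4)%N -> psum p k <= psum q k.

(* greatest lower bound: partial sums are the minima of partial sums *)
Definition meet4 (p q : vec4) : vec4 :=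
  fun i => Num.min (psum p i.+1) (psum q i.+1) - Num.min (psum p i) (psum q i).

Definition is_join4 (p q r : vec4) : Prop :=
  inP4 r /\ majorized p r /\ majorized q r /\
  (forall s, inP4 s -> majorized p s -> majorized q s -> majorized r s).

Definition sharma_mittal (alpha beta : R) (p : vec4) : R :=
  (1 - beta)^-1 * ((\sum_(i < 4) p i `^ alpha) `^ ((1 - beta) / (1 - alpha)) - 1).

End Defs.

From mathcomp Require Import all_boot all_order all_algebra.
From mathcomp Require Import all_classical all_reals all_analysis.
From mathcomp Require Import ring lra.
Set Implicit Arguments.
Unset Strict Implicit.
Unset Printing Implicit Defensive.

Import Order.TTheory GRing.Theory Num.Theory.
Local Open Scope ring_scope.

(* In each example the
   pointwise maximum and minimum of the partial sums are already the partial
   sums of non-increasing vectors, so join and meet are read off directly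
   (no averaging is needed), and since S_{2,3} p = (1 - (sum_i p_i^2)^2) / 2
   the two claims reduce to rational arithmetic. *)

Section Majorization.
Variable R : realType.
Implicit Types (p q r m : vec4 R) (a b c d : R).

Lemma psumS p (i : 'I_4) : psum p i.+1 = psum p i + p i.
Proof.
rewrite /psum (bigD1 i) //= addrC; congr (_ + _).
by apply: eq_bigl => j; rewrite ltnS ltn_neqAle andbC.
Qed.

Lemma join4_psum_max p q r : inP4 r ->
    (forall k, (k <= 4)%N -> psum r k = Num.max (psum p k) (psum q k)) ->
  is_join4 p q r.
Proof.
move=> Pr psum_r; split=> //; split; [|split].
- by move=> k k4; rewrite psum_r // le_max lexx.
- by move=> k k4; rewrite psum_r // le_max lexx orbT.
- by move=> s _ ps qs k k4; rewrite psum_r // ge_max ps ?qs.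
Qed.

Lemma meet4_psum_min p q m :
    (forall k, (k <= 4)%N -> psum m k = Num.min (psum p k) (psum q k)) ->
  meet4 p q = m.
Proof.
move=> psum_m; apply: funext => i.
rewrite /meet4 -!psum_m ?(ltnW (ltn_ord i)) // psumS.
by rewrite addrAC subrr add0r.
Qed.

Lemma sharma_mittal_2_3E p : (forall i, 0 <= p i) ->
  sharma_mittal 2 3 p = (1 - (\sum_(i < 4) p i ^+ 2) ^+ 2) / 2.
Proof.
move=> p_ge0; rewrite /sharma_mittal.
under eq_bigr => i _ do rewrite powR_mulrn //.
have -> : (1 - 3) / (1 - 2) = 2 :> R by field.
rewrite powR_mulrn; last by apply: sumr_ge0 => i _; rewrite sqr_ge0.
by field.
Qed.

Definition mkvec4 a b c d : vec4 R :=
  fun i => match val i with 0%N => a | 1%N => b | 2%N => c | _ => d end.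

Lemma sum_mkvec4 (f : R -> R) a b c d :
  \sum_(i < 4) f (mkvec4 a b c d i) = f a + f b + f c + f d.
Proof. by rewrite !big_ord_recr big_ord0 /= add0r. Qed.

Lemma psum_mkvec4 a b c d k : psum (mkvec4 a b c d) k =
  match k with
  | 0%N => 0 | 1%N => a | 2%N => a + b | 3%N => a + b + c | _ => a + b + c + d
  end.
Proof.
rewrite /psum big_mkcond !big_ord_recr big_ord0 /=.
by case: k => [|[|[|[|k]]]] /=; rewrite /mkvec4 /=; lra.
Qed.

Lemma inP4_mkvec4 a b c d :
  0 <= d -> d <= c -> c <= b -> b <= a -> a + b + c + d = 1 ->
  inP4 (mkvec4 a b c d).
Proof.
move=> d_ge0 le_dc le_cb le_ba sum1; split; [|split].
- by move=> [[|[|[|[|i]]]] Hi] //=; rewrite /mkvec4 /=; lra.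
- by rewrite (sum_mkvec4 id).
- by move=> [[|[|[|[|i]]]] Hi] [[|[|[|[|j]]]] Hj] //= Hij; rewrite /mkvec4 /=; lra.
Qed.

Lemma sharma_mittal_2_3_mkvec4 a b c d :
  0 <= a -> 0 <= b -> 0 <= c -> 0 <= d ->
  sharma_mittal 2 3 (mkvec4 a b c d) = (1 - (a ^+ 2 + b ^+ 2 + c ^+ 2 + d ^+ 2) ^+ 2) / 2.
Proof.
move=> a_ge0 b_ge0 c_ge0 d_ge0.
rewrite sharma_mittal_2_3E ?(sum_mkvec4 (fun x => x ^+ 2)) //.
by move=> [[|[|[|[|i]]]] Hi] //=; rewrite /mkvec4.
Qed.

End Majorization.

Ltac solve_psum_cases :=
  case=> [|[|[|[|[|?]]]]] //= _; rewrite !psum_mkvec4 /=; case: leP => ?; lra.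

Theorem mainTheorem7 (R : realType) :
  (exists (p q r : vec4 R),
     inP4 p /\ inP4 q /\ is_join4 p q r /\
     sharma_mittal 2 3 r + sharma_mittal 2 3 (meet4 p q)
       < sharma_mittal 2 3 p + sharma_mittal 2 3 q) /\
  (exists (p' q' r' : vec4 R),
     inP4 p' /\ inP4 q' /\ is_join4 p' q' r' /\
     sharma_mittal 2 3 r' + sharma_mittal 2 3 (meet4 p' q')
       > sharma_mittal 2 3 p' + sharma_mittal 2 3 q').
Proof.
split.
- exists (mkvec4 (4/10) (4/10) (2/10) 0), (mkvec4 (5/10) (3/10) (1/10) (1/10)),
    (mkvec4 (5/10) (3/10) (2/10) 0).
  rewrite (meet4_psum_min (m := mkvec4 (4/10) (4/10) (1/10) (1/10)));
    last by solve_psum_cases.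
  split; [by apply: inP4_mkvec4; lra | split; [by apply: inP4_mkvec4; lra | split]].
  + by apply: join4_psum_max; [apply: inP4_mkvec4; lra | solve_psum_cases].
  + by rewrite !sharma_mittal_2_3_mkvec4; lra.
- exists (mkvec4 (4/10) (3/10) (3/10) 0), (mkvec4 (4/10) (4/10) (1/10) (1/10)),
    (mkvec4 (4/10) (4/10) (2/10) 0).
  rewrite (meet4_psum_min (m := mkvec4 (4/10) (3/10) (2/10) (1/10)));
    last by solve_psum_cases.
  split; [by apply: inP4_mkvec4; lra | split; [by apply: inP4_mkvec4; lra | split]].
  + by apply: join4_psum_max; [apply: inP4_mkvec4; lra | solve_psum_cases].
  + by rewrite !sharma_mittal_2_3_mkvec4; lra.
Qed.
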